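(* Let $f\colon X\to C$ be a relatively minimal elliptic surface, $F\in\operatorname{Num}(X)$ the class of a fibre, and $\lambda=\min\{F\cdot D: D\text{ numerical class of an effective divisor}\}$. For $\mathcal E\in D(X)$ put $d(\mathcal E)=c_1(\mathcal E)\cdot F$. Then: (1) if $\gcd(\lambda\operatorname{rk}(\mathcal E),d(\mathcal E))=\gcd(\operatorname{rk}(\mathcal E),d(\mathcal E))$, there is a relative Fourier--Mukai transform $\Phi$ along $f$ with $\operatorname{rk}(\Phi^{-1}(\mathcal E))=0$; (2) if $\gcd(\lambda\operatorname{rk}(\mathcal E),d(\mathcal E))=\lambda\gcd(\operatorname{rk}(\mathcal E),d(\mathcal E))$, there is a relative Fourier--Mukai transform $\Phi$ along $f$ with $d(\Phi^{-1}(\mathcal E))=0$.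
   Context: Relative Fourier--Mukai transform along $f$: given $\begin{bmatrix} c&a\\ d&b\end{bmatrix}\in \mathrm{SL}_2(\mathbb{Z})$ with $\lambda\mid d$ and $a>0$, let $J_X(a,b)$ be the elliptic surface over $C$ whose fibre over $p\in C$ is a component of the moduli space of stable sheaves of rank $a$ and degree $b$ on $X_p$. There is a sheaf $\mathcal P$ on $X\times J_X(a,b)$, flat and strongly simple over both factors, with $\mathcal P_y$ of Chern class $(0,aF,b)$ on $X$ and $\mathcal P_x$ of Chern class $(0,aF,-c)$ on $J_X(a,b)$; the integral functor $\Phi=\Phi_{\mathcal P}\colon D(J_X(a,b))\to D(X)$ is an equivalence (called a relative Fourier--Mukai transform along $f$), and it satisfies $(\operatorname{rk}\Phi(\mathcal E),d(\Phi(\mathcal E)))^T=\begin{bmatrix} c&a\\ d&b\end{bmatrix}(\operatorname{rk}\mathcal E,d(\mathcal E))^T$ for all $\mathcal E\in D(J_X(a,b))$ (with $d$ on $J_X(a,b)$ defined using the class of a fibre there). Here $\gcd$ of integers is taken nonnegative. *)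

From HB Require Import structures.
From mathcomp Require Import all_boot all_order all_algebra.
Set Implicit Arguments. Unset Strict Implicit. Unset Printing Implicit Defensive.
Import Order.TTheory GRing.Theory Num.Theory.
Local Open Scope ring_scope.

(* The matrix [[c, a]; [d, b]] is the numerical matrix of a relative
   Fourier--Mukai transform along f (context): it lies in SL_2(Z),
   lambda divides d, and a > 0. *)
Definition rel_FM_matrix (lam c a d b : int) : Prop :=
  c * b - a * d = 1 /\ (lam %| d)%Z /\ 0 < a.

From HB Require Import structures.
From mathcomp Require Import all_boot all_order all_algebra.
From mathcomp Require Import zify ring.
Import Order.TTheory GRing.Theory Num.Theory.
Local Open Scope ring_scope.

(* Since Phi acts on (rk, d) through an SL_2(Z) matrix M = [[c, a]; [d, b]],
   Phi^{-1}(E) has (rk, d) = (b rk E - a d E, c d E - d rk E).  Write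
   (rk E, d E) = g (x, y) with g the gcd.  In case (1), lambda x and y are
   coprime, so Bezout lets us take (a, b) = +-(x, y) and complete it to such
   an M with lambda | d; then rk Phi^{-1}(E) = 0.  In case (2), x and y are
   coprime with lambda | y, so we take (c, d) = +-(x, y) and complete it,
   shifting (a, b) by a multiple of (x, y) to make a > 0; then
   d Phi^{-1}(E) = 0. *)

Lemma sl2_solve (R : comPzRingType) (c a d b x y r s : R) :
  c * b - a * d = 1 -> r = c * x + a * y -> s = d * x + b * y ->
  x = b * r - a * s /\ y = c * s - d * r.
Proof.
by move=> det -> ->; split; rewrite -[LHS]mul1r -det; ring.
Qed.

Lemma rel_FM_matrix_kill_rk_coprime {lam x y : int} :
  coprimez (lam * x) y -> x != 0 ->
  exists c a d b, rel_FM_matrix lam c a d b /\ b * x = a * y.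
Proof.
wlog x_gt0 : x y / 0 < x => [sym co x_neq0|co _].
  have [x_lt0|x_gt0|x0] := ltgtP x 0;
    [|exact: sym|by rewrite x0 eqxx in x_neq0].
  have [|||c [a [d [b [M kill]]]]] := sym (- x) (- y).
  - by rewrite oppr_gt0.
  - by rewrite mulrN coprimeNz coprimezN.
  - by rewrite oppr_eq0.
  by exists c, a, d, b; split=> //; apply: oppr_inj; rewrite -!mulrN.
have [[u v] /= bezout] := coprimezP _ _ co.
exists v, x, (- (u * lam)), y; split; last exact: mulrC.
split; [by rewrite -bezout; ring | split=> //].
by apply/dvdzP; exists (- u); ring.
Qed.

Lemma rel_FM_matrix_kill_d_coprime {lam x y : int} :
  coprimez x y -> (lam %| y)%Z ->
  exists c a d b, rel_FM_matrix lam c a d b /\ c * y = d * x.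
Proof.
wlog x_ge0 : x y / 0 <= x => [sym co lam_y|co lam_y].
  have [x_ge0|x_lt0] := lerP 0 x; first exact: sym.
  have [|||c [a [d [b [M kill]]]]] := sym (- x) (- y).
  - by rewrite oppr_ge0 ltW.
  - by rewrite coprimeNz coprimezN.
  - by rewrite rpredN.
  by exists c, a, d, b; split=> //; apply: oppr_inj; rewrite -!mulrN.
have [[u v] /= bezout] := coprimezP _ _ co.
have [x0|x_neq0] := eqVneq x 0.
  have lam_1 : (lam %| 1)%Z.
    by rewrite -[X in (_ %| X)%Z]bezout x0 mulr0 add0r dvdz_mull.
  exists 0, 1, (-1), 0; split; last by rewrite x0; ring.
  by split; [ring | split; rewrite ?rpredN].
(* shifting (a, b) by N (x, y) keeps det = 1 and makes a = N x - v positive *)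
pose N := `|v| + 1.
have a_gt0 : 0 < N * x - v by rewrite /N; nia.
exists x, (N * x - v), y, (u + N * y); split; last exact: mulrC.
by split; [rewrite -bezout; ring | split].
Qed.

Lemma divz_gcdzlK (r s : int) : (r %/ gcdz r s)%Z * gcdz r s = r.
Proof. exact/divzK/dvdz_gcdl. Qed.

Lemma divz_gcdzrK (r s : int) : (s %/ gcdz r s)%Z * gcdz r s = s.
Proof. exact/divzK/dvdz_gcdr. Qed.

Section GcdReduction.

Context {r s : int}.
Let g := gcdz r s.
Hypothesis g_neq0 : g != 0.

Lemma coprimez_div_gcdz {lam : int} :
  gcdz (lam * r) s = g -> coprimez (lam * (r %/ g)%Z) (s %/ g)%Z.
Proof.
move=> gcd_eq; apply/eqP/(mulIf g_neq0); rewrite mul1r.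
have := mulz_gcdl (lam * (r %/ g)%Z) (s %/ g)%Z g.
by rewrite -mulrA divz_gcdzlK divz_gcdzrK gcd_eq.
Qed.

Lemma dvdz_div_gcdz {lam : int} :
  gcdz (lam * r) s = lam * g -> (lam %| s %/ g)%Z.
Proof.
by move=> gcd_eq; rewrite -(dvdz_mul2r g_neq0) divz_gcdzrK -gcd_eq dvdz_gcdr.
Qed.

End GcdReduction.

Lemma rel_FM_matrix_kill_rk {lam r s : int} :
  r != 0 -> gcdz (lam * r) s = gcdz r s ->
  exists c a d b, rel_FM_matrix lam c a d b /\ b * r - a * s = 0.
Proof.
move=> r_neq0 gcd_eq.
have g_neq0 : gcdz r s != 0 by rewrite gcdz_eq0 negb_and r_neq0.
have [|c [a [d [b [M kill]]]]] :=
  rel_FM_matrix_kill_rk_coprime (coprimez_div_gcdz g_neq0 gcd_eq).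
  by apply: contraNneq r_neq0 => x0; rewrite -(divz_gcdzlK r s) x0 mul0r.
exists c, a, d, b; split=> //.
rewrite -[X in b * X](divz_gcdzlK r s) -[X in a * X](divz_gcdzrK r s).
by rewrite !mulrA kill subrr.
Qed.

Lemma rel_FM_matrix_kill_d {lam r s : int} :
  s != 0 -> gcdz (lam * r) s = lam * gcdz r s ->
  exists c a d b, rel_FM_matrix lam c a d b /\ c * s - d * r = 0.
Proof.
move=> s_neq0 gcd_eq.
have g_neq0 : gcdz r s != 0 by rewrite gcdz_eq0 negb_and s_neq0 orbT.
have co : coprimez (r %/ gcdz r s)%Z (s %/ gcdz r s)%Z.
  by rewrite -[X in coprimez X _]mul1r coprimez_div_gcdz ?mul1r.
have [c [a [d [b [M kill]]]]] :=
  rel_FM_matrix_kill_d_coprime co (dvdz_div_gcdz g_neq0 gcd_eq).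
exists c, a, d, b; split=> //.
rewrite -[X in c * X](divz_gcdzrK r s) -[X in d * X](divz_gcdzlK r s).
by rewrite !mulrA kill subrr.
Qed.

Theorem lemma3p13 (lam : int) (hlam : 0 < lam)
  (ObjX : Type) (rkX dX : ObjX -> int)
  (J : int -> int -> int -> int -> Type)
  (rkJ dJ : forall c a d b, J c a d b -> int)
  (Phi : forall c a d b, J c a d b -> ObjX)
  (Phiinv : forall c a d b, ObjX -> J c a d b)
  (hinv : forall c a d b (E : ObjX), rel_FM_matrix lam c a d b ->
     rkX (Phi c a d b (Phiinv c a d b E)) = rkX E /\ dX (Phi c a d b (Phiinv c a d b E)) = dX E)
  (hnum : forall c a d b (G : J c a d b), rel_FM_matrix lam c a d b ->
     rkX (Phi c a d b G) = c * rkJ c a d b G + a * dJ c a d b G /\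
     dX (Phi c a d b G) = d * rkJ c a d b G + b * dJ c a d b G)
  (E : ObjX) :
  (gcdz (lam * rkX E) (dX E) = gcdz (rkX E) (dX E) ->
     rkX E = 0 \/
     exists c a d b, rel_FM_matrix lam c a d b /\ rkJ c a d b (Phiinv c a d b E) = 0) /\
  (gcdz (lam * rkX E) (dX E) = lam * gcdz (rkX E) (dX E) ->
     dX E = 0 \/
     exists c a d b, rel_FM_matrix lam c a d b /\ dJ c a d b (Phiinv c a d b E) = 0).
Proof.
have numbers_Phiinv c a d b : rel_FM_matrix lam c a d b ->
    rkJ c a d b (Phiinv c a d b E) = b * rkX E - a * dX E /\
    dJ c a d b (Phiinv c a d b E) = c * dX E - d * rkX E.
  move=> M; have [rk_inv d_inv] := hinv c a d b E M.
  have [rk_Phi d_Phi] := hnum c a d b (Phiinv c a d b E) M.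
  by apply: sl2_solve M.1 _ _; rewrite -?rk_inv -?d_inv.
split=> gcd_eq.
- have [->|rk_neq0] := eqVneq (rkX E) 0; [by left | right].
  have [c [a [d [b [M kill]]]]] := rel_FM_matrix_kill_rk rk_neq0 gcd_eq.
  by exists c, a, d, b; rewrite (numbers_Phiinv c a d b M).1.
- have [->|d_neq0] := eqVneq (dX E) 0; [by left | right].
  have [c [a [d [b [M kill]]]]] := rel_FM_matrix_kill_d d_neq0 gcd_eq.
  by exists c, a, d, b; rewrite (numbers_Phiinv c a d b M).2.
Qed.
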